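(* Let $n,m$ be positive integers (spatial dimensions), let $a,A$ be real numbers with $A\neq-3$ and $$\frac{a+3}{2}=\frac{2}{A+3}.$$ Let $\eta,\mathcal{E}$ be real, let $l,\ell$ be real with $$l+\frac n2-1=\frac{2}{A+3}\left(\ell+\frac m2-1\right),$$ and set $E=-\eta\left(\frac{2}{A+3}\right)^2$, $\xi=-\mathcal{E}\left(\frac{2}{A+3}\right)^2$. Suppose $u\in C^2((0,\infty))$ satisfies the $n$-dimensional radial equation of $U(r)=\xi r^{a+1}$: $$u''(r)+\left[E-\frac{\left(l-\frac32+\frac n2\right)\left(l-\frac12+\frac n2\right)}{r^{2}}-\xi r^{a+1}\right]u(r)=0 .$$ Then $v(\rho)=\rho^{-(A+1)/4}u\!\left(\rho^{(A+3)/2}\right)$ (coordinates $r=\rho^{(A+3)/2}$, $u(r)=\rho^{(A+1)/4}v(\rho)$) satisfies the $m$-dimensional radial equation of $V(\rho)=\eta\rho^{A+1}$: $$v''(\rho)+\left[\mathcal{E}-\frac{\left(\ell-\frac32+\frac m2\right)\left(\ell-\frac12+\frac m2\right)}{\rho^{2}}-\eta\rho^{A+1}\right]v(\rho)=0 .$$ In this sense the $n$-dimensional potential $\xi r^{a+1}$ and the $m$-dimensional potential $\eta\rho^{A+1}$ are quantum Newtonianly dual, bound-state eigenfunctions of $U$ (energy $E$, angular quantum number $l$) being transformed into eigenfunctions of $V$ (energy $\mathcal{E}$, angular quantum number $\ell$).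
   Context: In $d$ spatial dimensions the radial equation for a central potential $W$ (units $\hbar=2m=1$), with $u(r)=rR(r)$ where $R$ is the radial wave function, energy $E$ and angular quantum number $l$, is $u''+\left[E-\frac{(l-\frac32+\frac d2)(l-\frac12+\frac d2)}{r^2}-W(r)\right]u=0$. *)

From Stdlib Require Import Reals.
From Coquelicot Require Import Coquelicot.
Open Scope R_scope.

Definition C2_pos (u : R -> R) : Prop :=
  forall r, 0 < r ->
    ex_derive u r /\ ex_derive (Derive u) r /\ continuous (Derive_n u 2) r.

Definition radial_eq_at (d : nat) (l E : R) (W : R -> R) (u : R -> R) (r : R) : Prop :=
  Derive_n u 2 r
  + (E - (l - 3/2 + INR d / 2) * (l - 1/2 + INR d / 2) / r ^ 2 - W r) * u r = 0.

(** With [r = rho^p] and [v(rho) = rho^k u(rho^p)], one computes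
    [rho^2 v'' = rho^k (k(k-1) u + (2k+p-1) p r u' + p^2 r^2 u'')], so for
    [k = (1-p)/2] the first-order term drops out and a radial equation for [u]
    turns into one for [v].  Writing the centrifugal coefficient
    [(l-3/2+d/2)(l-1/2+d/2)] as [lambda^2 - 1/4] with [lambda = l+d/2-1], the new
    equation is again radial, with [lambda' = p lambda] and potential determined by
    [rho^2 (V - E') = p^2 r^2 (W - E)].  For [p = (A+3)/2] and [(a+3) p = 2]
    the power potentials [xi r^(a+1)] and [eta rho^(A+1)] exchange the roles of
    coupling constant and energy. *)
From Stdlib Require Import Reals Lra.
From Coquelicot Require Import Coquelicot.
Open Scope R_scope.

Lemma Rpower_pos (x y : R) : 0 < Rpower x y.
Proof. exact (exp_pos _). Qed.

Lemma Rpower_sub1 (x y : R) : 0 < x -> Rpower x (y - 1) = Rpower x y / x.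
Proof.
  intros Hx. unfold Rminus, Rdiv.
  now rewrite Rpower_plus, Rpower_Ropp, Rpower_1.
Qed.

Lemma is_derive_Rpower_l (y x : R) :
  0 < x -> is_derive (fun t => Rpower t y) x (y * Rpower x y / x).
Proof.
  intros Hx. apply is_derive_Reals.
  replace (y * Rpower x y / x) with (y * Rpower x (y - 1))
    by (rewrite Rpower_sub1 by exact Hx; field; lra).
  now apply derivable_pt_lim_power.
Qed.

Lemma is_derive_comp_Rpower (g : R -> R) (p x dg : R) :
  0 < x -> is_derive g (Rpower x p) dg ->
  is_derive (fun t => g (Rpower t p)) x (p * Rpower x p / x * dg).
Proof.
  intros Hx Hg.
  exact (is_derive_comp g (fun t => Rpower t p) x dg _ Hg (is_derive_Rpower_l p x Hx)).
Qed.

Lemma radial_eq_at_iff (d : nat) (l E : R) (W u : R -> R) (r : R) :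
  r <> 0 ->
  radial_eq_at d l E W u r <->
  r ^ 2 * Derive_n u 2 r = ((l + INR d / 2 - 1) ^ 2 - 1 / 4 + r ^ 2 * (W r - E)) * u r.
Proof.
  intros Hr. unfold radial_eq_at. split; intros H.
  - apply Rminus_diag_uniq.
    rewrite <- (Rmult_0_r (r ^ 2)), <- H. field. exact Hr.
  - replace (Derive_n u 2 r) with
      (((l + INR d / 2 - 1) ^ 2 - 1 / 4 + r ^ 2 * (W r - E)) * u r / r ^ 2)
      by (rewrite <- H; field; exact Hr).
    field. exact Hr.
Qed.

Definition radial_transform (k p : R) (u : R -> R) (rho : R) : R :=
  Rpower rho k * u (Rpower rho p).

Section RadialTransform.

Variables (k p : R) (u : R -> R).
Hypothesis hu : forall r, 0 < r -> ex_derive u r /\ ex_derive (Derive u) r.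

Definition radial_transform_derive (rho : R) : R :=
  let r := Rpower rho p in
  Rpower rho (k - 1) * (k * u r + p * (r * Derive u r)).

Lemma is_derive_radial_transform (rho : R) :
  0 < rho -> is_derive (radial_transform k p u) rho (radial_transform_derive rho).
Proof.
  intros Hr.
  destruct (hu _ (Rpower_pos rho p)) as [[du Hdu] _].
  assert (Hd := is_derive_mult _ _ rho _ _ (is_derive_Rpower_l k rho Hr)
                  (is_derive_comp_Rpower u p rho du Hr Hdu) Rmult_comm).
  match type of Hd with is_derive _ _ ?l =>
    replace (radial_transform_derive rho) with l; [exact Hd|] end.
  unfold radial_transform_derive, plus, mult; simpl.
  rewrite (is_derive_unique _ _ _ Hdu), Rpower_sub1 by exact Hr. field. lra.
Qed.

Lemma is_derive2_radial_transform (rho : R) :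
  2 * k + p = 1 -> 0 < rho ->
  let r := Rpower rho p in
  is_derive (Derive (radial_transform k p u)) rho
    (Rpower rho k / rho ^ 2 * (k * (k - 1) * u r + p ^ 2 * r ^ 2 * Derive_n u 2 r)).
Proof.
  intros hkp Hr r.
  destruct (hu _ (Rpower_pos rho p)) as [[du Hdu] [ddu Hddu]].
  assert (Hur := is_derive_comp_Rpower u p rho du Hr Hdu).
  assert (Hdur := is_derive_comp_Rpower (Derive u) p rho ddu Hr Hddu).
  assert (Hd := is_derive_mult _ _ rho _ _ (is_derive_Rpower_l (k - 1) rho Hr)
    (is_derive_plus _ _ rho _ _ (is_derive_scal _ rho k _ Hur)
       (is_derive_scal _ rho p _
          (is_derive_mult _ _ rho _ _ (is_derive_Rpower_l p rho Hr) Hdur Rmult_comm)))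
    Rmult_comm).
  apply (is_derive_ext_loc radial_transform_derive).
  { apply (filter_imp (fun t => 0 < t)); [|exact (open_gt 0 rho Hr)].
    intros t Ht. symmetry. apply is_derive_unique, is_derive_radial_transform, Ht. }
  match type of Hd with is_derive _ _ ?l =>
    replace (Rpower rho k / rho ^ 2 * _) with l; [exact Hd|] end.
  change (Derive_n u 2 r) with (Derive (Derive u) r).
  unfold plus, mult, r; simpl.
  rewrite (is_derive_unique _ _ _ Hdu), (is_derive_unique _ _ _ Hddu), !Rpower_sub1 by exact Hr.
  replace k with ((1 - p) / 2) by lra. field. lra.
Qed.

Lemma radial_eq_radial_transform (d d' : nat) (l l' E E' : R) (W W' : R -> R) (rho : R) :
  2 * k + p = 1 -> 0 < rho ->
  l' + INR d' / 2 - 1 = p * (l + INR d / 2 - 1) ->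
  rho ^ 2 * (W' rho - E') = p ^ 2 * Rpower rho p ^ 2 * (W (Rpower rho p) - E) ->
  radial_eq_at d l E W u (Rpower rho p) ->
  radial_eq_at d' l' E' W' (radial_transform k p u) rho.
Proof.
  intros hkp Hr hl hW Hu.
  apply radial_eq_at_iff in Hu; [|apply Rgt_not_eq, Rpower_pos].
  apply radial_eq_at_iff; [lra|].
  change (Derive_n _ 2 rho) with (Derive (Derive (radial_transform k p u)) rho).
  rewrite (is_derive_unique _ _ _ (is_derive2_radial_transform rho hkp Hr)), hl, hW.
  unfold radial_transform.
  set (r := Rpower rho p) in *.
  replace (p ^ 2 * r ^ 2 * Derive_n u 2 r) with (p ^ 2 * (r ^ 2 * Derive_n u 2 r)) by ring.
  rewrite Hu. replace k with ((1 - p) / 2) by lra. field. lra.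
Qed.

End RadialTransform.

Lemma power_potentials_dual (a b p xi E eta calE rho : R) :
  0 < rho -> (a + 3) * p = 2 -> b + 2 = 2 * p ->
  p ^ 2 * E = - eta -> p ^ 2 * xi = - calE ->
  rho ^ 2 * (eta * Rpower rho b - calE) =
  p ^ 2 * Rpower rho p ^ 2 * (xi * Rpower (Rpower rho p) (a + 1) - E).
Proof.
  intros Hr hap hbp hE hxi.
  assert (Hsq : Rpower rho p ^ 2 = Rpower rho (p * INR 2))
    by now rewrite <- Rpower_mult, Rpower_pow by apply Rpower_pos.
  assert (Hb : Rpower rho p ^ 2 = rho ^ 2 * Rpower rho b).
  { rewrite Hsq. replace (p * INR 2) with (INR 2 + b) by (simpl; lra).
    now rewrite Rpower_plus, Rpower_pow by exact Hr. }
  assert (Ha : Rpower rho p ^ 2 * Rpower (Rpower rho p) (a + 1) = rho ^ 2).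
  { rewrite Hsq, Rpower_mult, <- Rpower_plus, <- Rpower_pow by exact Hr.
    f_equal. simpl. lra. }
  replace (p ^ 2 * _ * _) with
    ((p ^ 2 * xi) * (Rpower rho p ^ 2 * Rpower (Rpower rho p) (a + 1))
     - (p ^ 2 * E) * Rpower rho p ^ 2) by ring.
  rewrite Ha, Hb, hE, hxi. ring.
Qed.

Theorem mainTheorem4 (n m : nat) (hn : (0 < n)%nat) (hm : (0 < m)%nat)
  (a A : R) (hA : A <> -3) (haA : (a + 3) / 2 = 2 / (A + 3))
  (eta calE l ell : R)
  (hl : l + INR n / 2 - 1 = 2 / (A + 3) * (ell + INR m / 2 - 1))
  (u : R -> R) (hu : C2_pos u)
  (hODE : forall r, 0 < r ->
     radial_eq_at n l (- eta * (2 / (A + 3)) ^ 2)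
       (fun r => - calE * (2 / (A + 3)) ^ 2 * Rpower r (a + 1)) u r) :
  let v := fun rho => Rpower rho (- (A + 1) / 4) * u (Rpower rho ((A + 3) / 2)) in
  forall rho, 0 < rho ->
    ex_derive v rho /\ ex_derive (Derive v) rho /\
    radial_eq_at m ell calE (fun rho => eta * Rpower rho (A + 1)) v rho.
Proof.
  set (k := - (A + 1) / 4). set (p := (A + 3) / 2).
  intros v. change v with (radial_transform k p u). intros rho Hr.
  assert (hp : p <> 0) by (unfold p; intros H; apply hA; lra).
  assert (hkp : 2 * k + p = 1) by (unfold k, p; field).
  assert (hinvp : 2 / (A + 3) = / p) by (unfold p; field; lra).
  assert (hu' : forall r, 0 < r -> ex_derive u r /\ ex_derive (Derive u) r)
    by (intros r Hr'; destruct (hu r Hr') as [H1 [H2 _]]; tauto).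
  rewrite hinvp in haA, hl, hODE.
  split; [|split].
  - eexists. now apply is_derive_radial_transform.
  - eexists. now apply is_derive2_radial_transform.
  - apply (radial_eq_radial_transform k p u hu' n m l ell (- eta * (/ p) ^ 2) calE
             (fun r => - calE * (/ p) ^ 2 * Rpower r (a + 1))); try assumption.
    + rewrite hl. field. exact hp.
    + apply power_potentials_dual; try assumption.
      * replace (a + 3) with (2 * / p) by lra. field. exact hp.
      * unfold p. field.
      * field. exact hp.
      * field. exact hp.
    + apply hODE, Rpower_pos.
Qed.
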